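(* Let $T$ be a (planted) phylogenetic tree with leaf set $L$ and species map $\sigma:L\to\mathscr{S}$. Let $x\in L$, let $s\in\mathscr{S}$ with $s\neq\sigma(x)$, and let $L[s]=\{y\in L:\sigma(y)=s\}$. Let $Y\subseteq L[s]$ contain every best match of $x$ in species $s$, and let $Z\subseteq L$ be a non-empty set of leaves each of which is an outgroup for $Y\cup\{x\}$. Define a digraph $\Gamma$ on vertex set $Y$ as follows: for each pair of distinct $y',y''\in Y$ choose some $z\in Z$ and determine $Q=\overline{T}[x,y',y'',z]$ (which is assumed to be obtained correctly); if $Q\in\{(xz|y'y''),\times\}$ insert both arcs $(y',y'')$ and $(y'',y')$; if $Q=(xy'|y''z)$ insert the arc $(y'',y')$; if $Q=(xy''|y'z)$ insert the arc $(y',y'')$. Then $\Gamma$ has a unique strongly connected component without out-edges, and its vertex set is exactly the set $\{y\in L[s]: x\to y\}$ of best matches of $x$ in species $s$.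
   Context: A planted phylogenetic tree $T$ has a distinguished leaf $0_T$ (planted root) whose unique neighbour $\rho_T$ is the root; every other inner vertex has at least two children; $L$ is the set of leaves other than $0_T$. $a\preceq b$ means $b$ lies on the path from $a$ to $0_T$; $\operatorname{lca}(A)$ is the $\preceq$-minimal vertex above all of $A$. Best match: $y\in L$ is a best match of $x\in L$, written $x\to y$, if $\operatorname{lca}(x,y)\preceq\operatorname{lca}(x,y')$ for all $y'\in L$ with $\sigma(y')=\sigma(y)$. For $L'\subseteq L$ and $z\in L\setminus L'$, $z$ is an outgroup for $L'$ if $\operatorname{lca}(L')\prec\operatorname{lca}(L'\cup\{z\})$. The unrooted tree $\overline{T}$ is obtained from $T$ by deleting $0_T$ and its edge and, if $\rho_T$ has exactly two children, suppressing $\rho_T$. For four leaves $p,q,r,s$, $\overline{T}[p,q,r,s]$ is the subtree of $\overline{T}$ spanned by them with degree-2 vertices suppressed; $\overline{T}[p,q,r,s]=(pq|rs)$ if some edge of it separates $\{p,q\}$ from $\{r,s\}$, and $\overline{T}[p,q,r,s]=\times$ (star tree) if no such separating edge exists for any of the three splits. An arc $(a,b)$ of $\Gamma$ is an out-edge of a strongly connected component $B$ if $a\in B$, $b\notin B$. *)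

From mathcomp Require Import all_boot.
Set Implicit Arguments.
Unset Strict Implicit.
Unset Printing Implicit Defensive.

Section Tree.
Variable V : finType.
(* A rooted tree on the finite vertex type V is given by a parent map:
   every vertex other than the planted root r0 has its parent, and
   parent r0 = r0. *)
Variables (parent : V -> V) (r0 : V).

Definition children (v : V) : {set V} :=
  [set u | (u != v) && (parent u == v)].

Definition prec (a b : V) : bool := fconnect parent a b.
Definition sprec (a b : V) : bool := prec a b && (a != b).

Definition planted_tree : Prop :=
  [/\ parent r0 = r0,
      (forall v, prec v r0),
      #|children r0| = 1 &
      (forall v, v != r0 -> children v != set0 -> 1 < #|children v|)].

Definition leaves : {set V} := [set v | (v != r0) && (children v == set0)].

Definition rho : V := odflt r0 [pick u in children r0].

Definition above (A : {set V}) (v : V) : bool := [forall a in A, prec a v].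

Definition lca (A : {set V}) : V :=
  odflt r0 [pick v | above A v && [forall w, above A w ==> prec v w]].

Definition best_match (S : eqType) (sigma : V -> S) (x y : V) : Prop :=
  x \in leaves /\ y \in leaves /\
  forall y', y' \in leaves -> sigma y' = sigma y ->
    prec (lca [set x; y]) (lca [set x; y']).

Definition outgroup (L' : {set V}) (z : V) : Prop :=
  L' \subset leaves /\ z \in leaves :\: L' /\ sprec (lca L') (lca (z |: L')).

(* Splits of the unrooted tree Tbar: the edges of Tbar induce exactly the
   bipartitions {C(u), L \ C(u)} of the leaves, where C(u) is the set of leaves
   below u and u ranges over the vertices other than 0_T and rho_T
   (the edge {u, parent u}; when rho_T is suppressed, its two child edges
   merge into a single edge inducing the same split). *)
Definition below (u a : V) : bool := prec a u.

Definition quartet (p q r s : V) : bool :=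
  [exists u, [&& u != r0, u != rho &
     (below u p && below u q && ~~ below u r && ~~ below u s) ||
     (below u r && below u s && ~~ below u p && ~~ below u q)]].

Definition star (p q r s : V) : bool :=
  ~~ quartet p q r s && ~~ quartet p r q s && ~~ quartet p s q r.

(* The digraph Gamma on Y: arc (a,b), with z = zc a b the chosen outgroup.
   From the rules: with (y',y'') = (a,b), arc (a,b) is inserted iff
   Q in {(xz|ab), x} or Q = (xb|az). *)
Definition gamma_arc (x : V) (Y : {set V}) (zc : V -> V -> V) : rel V :=
  fun a b => [&& a \in Y, b \in Y, a != b &
     let z := zc a b in
     [|| quartet x z a b, star x a b z | quartet x b a z]].

Definition is_scc (Y : {set V}) (e : rel V) (B : {set V}) : Prop :=
  exists2 w, w \in Y & B = [set v in Y | connect e w v && connect e v w].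

Definition no_out_edges (e : rel V) (B : {set V}) : Prop :=
  forall a b, a \in B -> e a b -> b \in B.

End Tree.

From mathcomp Require Import all_boot.
Set Implicit Arguments. Unset Strict Implicit. Unset Printing Implicit Defensive.

(* Every lca(x, y) lies on the path from x to the root, so y |-> lca(x, y)
   totally preorders the leaves, and the best matches of x in species s are
   the leaves of species s minimising it.  Since z is an outgroup for
   Y + {x}, the quartet x, y', y'', z resolves as (xy'|y''z) exactly when
   lca(x, y') is strictly below lca(x, y''); hence Gamma has the arc
   y' -> y'' iff lca(x, y'') is below lca(x, y').  In such a digraph the set
   of minima, nonempty because a best match exists and lies in Y, is closed
   under arcs and reachable from every vertex, so it is the unique strongly
   connected component without out-edges. *)

Section Ancestry.
Variables (V : finType) (parent : V -> V).

Local Notation prec := (prec parent).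

Lemma prec_trans : transitive prec.
Proof. by move=> b a c; apply: connect_trans. Qed.

Lemma prec_findex c u v :
  prec c u -> prec c v -> findex parent c u <= findex parent c v -> prec u v.
Proof.
move=> cu cv le_uv.
rewrite -(iter_findex cu) -(iter_findex cv) -(subnK le_uv) iterD.
exact: fconnect_iter.
Qed.

Lemma prec_total c u v : prec c u -> prec c v -> prec u v || prec v u.
Proof.
move=> cu cv; case: (leqP (findex parent c u) (findex parent c v)) => [|/ltnW] le.
  by rewrite (prec_findex cu cv le).
by rewrite (prec_findex cv cu le) orbT.
Qed.

Lemma ex_prec_least (I : finType) (P : pred I) (f : I -> V) c :
  (exists i, P i) -> (forall i, P i -> prec c (f i)) ->
  exists2 i, P i & forall j, P j -> prec (f i) (f j).
Proof.
move=> [i0 Pi0] cf; case: (arg_minnP (fun i => findex parent c (f i)) Pi0).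
move=> i Pi i_min; exists i => // j Pj.
exact: prec_findex (cf i Pi) (cf j Pj) (i_min j Pj).
Qed.

Lemma laminar_clades c u v a b :
  prec c u -> prec c v -> prec a u -> prec b v -> prec a v || prec b u.
Proof.
move=> cu cv au bv; case/orP: (prec_total cu cv) => [uv|vu].
  by rewrite (prec_trans au uv).
by rewrite (prec_trans bv vu) orbT.
Qed.

Variable r0 : V.

Local Notation quartet := (quartet parent r0).

Lemma quartet_swap p q r s : quartet p q r s = quartet p q s r.
Proof.
apply: eq_existsb => u.
by case: (below parent u p); case: (below parent u q);
  case: (below parent u r); case: (below parent u s); rewrite ?andbT ?andbF ?orbF.
Qed.

Lemma quartet_incompatible p q r s : quartet p q r s -> quartet p r q s -> False.
Proof.
move=> /existsP [u /and3P [_ _ Hu]] /existsP [v /and3P [_ _ Hv]].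
rewrite /below in Hu Hv.
case/orP: Hu => /andP [/andP [/andP [u1 u2] /negbTE u3] /negbTE u4];
case/orP: Hv => /andP [/andP [/andP [v1 v2] /negbTE v3] /negbTE v4].
- by have := laminar_clades u1 v1 u2 v2; rewrite v3 u3.
- by have := laminar_clades u2 v1 u1 v2; rewrite v3 u4.
- by have := laminar_clades u1 v2 u2 v1; rewrite v4 u3.
- by have := laminar_clades u2 v2 u1 v1; rewrite v4 u4.
Qed.

End Ancestry.

Section SinkComponent.
Variables (T : finType) (Y : {set T}) (le : rel T) (e : rel T).
Hypothesis le_trans : transitive le.
Hypothesis eE : forall a b, e a b = [&& a \in Y, b \in Y, a != b & le b a].

Definition minima : {set T} := [set y in Y | [forall (y' | y' \in Y), le y y']].

Lemma minimaP m : reflect (m \in Y /\ forall y, y \in Y -> le m y) (m \in minima).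
Proof. by rewrite inE; apply: (iffP andP) => -[mY /forall_inP]. Qed.

Lemma minima_closed a b : a \in minima -> e a b -> b \in minima.
Proof.
rewrite eE => /minimaP [_ a_min] /and4P [_ bY _ ba].
by apply/minimaP; split=> // y yY; apply: le_trans ba (a_min y yY).
Qed.

Lemma connect_minima a v : a \in minima -> connect e a v -> v \in minima.
Proof.
move=> a_min /connectP [p p_path ->] {v}; elim: p a a_min p_path => //= b p IHp a a_min.
by case/andP=> ab /IHp; apply; apply: minima_closed ab.
Qed.

Lemma connect_to_minima a m : a \in Y -> m \in minima -> connect e a m.
Proof.
move=> aY /minimaP [mY m_min]; have [-> | am] := eqVneq a m; first exact: connect0.
by apply: connect1; rewrite eE aY mY am m_min.
Qed.

Lemma scc_minima m : m \in minima ->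
  [set v in Y | connect e m v && connect e v m] = minima.
Proof.
move=> m_min; apply/setP => v; rewrite inE.
apply/idP/idP => [/and3P [_ /(connect_minima m_min) //] | v_min].
have /minimaP [vY _] := v_min; have /minimaP [mY _] := m_min.
by rewrite vY !connect_to_minima.
Qed.

Lemma sink_scc_minima m : m \in minima ->
  forall B, is_scc Y e B /\ no_out_edges e B <-> B = minima.
Proof.
move=> m_min B; have /minimaP [mY m_least] := m_min.
split => [[[w wY ->] B_closed] | ->]; last first.
  by split; [exists m; rewrite ?scc_minima | move=> a b /minima_closed; apply].
suff w_min : w \in minima by rewrite scc_minima.
have [-> // | wm] := eqVneq w m.
have wB : w \in [set v in Y | connect e w v && connect e v w] by rewrite inE wY connect0.
have /(B_closed _ _ wB) : e w m by rewrite eE wY mY wm m_least.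
by rewrite inE => /and3P [_ _ /(connect_minima m_min)].
Qed.

End SinkComponent.

Section PlantedTree.
Variables (V : finType) (parent : V -> V) (r0 : V).
Hypothesis tree : planted_tree parent r0.

Local Notation prec := (prec parent).
Local Notation leaves := (leaves parent r0).
Local Notation rho := (rho parent r0).
Local Notation lca := (lca parent r0).
Local Notation quartet := (quartet parent r0).

Lemma parent_root : parent r0 = r0.
Proof. by case: tree. Qed.

Lemma prec_root v : prec v r0.
Proof. by case: tree. Qed.

Lemma iter_cycle_root a n : 0 < n -> iter n parent a = a -> a = r0.
Proof.
move=> n_gt0 a_cycle; have a_r0 := iter_findex (prec_root a).
set m := findex parent a r0 in a_r0.
have m_le : m <= m * n by rewrite leq_pmulr.
have <- : iter (m * n) parent a = a by rewrite iterM iter_fix.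
by rewrite -(subnK m_le) iterD a_r0 iter_fix // parent_root.
Qed.

Lemma prec_antisym a b : prec a b -> prec b a -> a = b.
Proof.
move=> ab ba; have b_iter := iter_findex ab; have a_iter := iter_findex ba.
have a_cycle : iter (findex parent b a + findex parent a b) parent a = a.
  by rewrite iterD b_iter a_iter.
case: (posnP (findex parent b a + findex parent a b)) => [|n_gt0].
  by move/eqP; rewrite addn_eq0 => /andP [_ /eqP i0]; rewrite -b_iter i0.
by rewrite -b_iter (iter_cycle_root n_gt0 a_cycle) iter_fix // parent_root.
Qed.

Lemma children_root : children parent r0 = [set rho].
Proof.
case: tree => _ _ /eqP/cards1P [c children_r0] _.
rewrite children_r0 /rho; case: pickP => [u|/(_ c)]; rewrite children_r0 inE ?eqxx //.
by move=> /eqP ->.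
Qed.

Lemma prec_rho v : v != r0 -> prec v rho.
Proof.
move=> v_r0; have v_root := prec_root v; set n := findex parent v r0.
have n_gt0 : 0 < n by rewrite lt0n findex_eq0.
have n_lt : n.-1 < order parent v.
  by rewrite (ltn_trans _ (findex_max v_root)) ?prednK // ltnSn.
set u := iter n.-1 parent v.
have u_parent : parent u = r0 by rewrite /u -iterS prednK // iter_findex.
have u_r0 : u != r0.
  apply/eqP => u_r0; have := findex_iter n_lt; rewrite -/u u_r0 -/n.
  by rewrite -{1}(prednK n_gt0) => /esym; apply: n_Sn.
have : u \in children parent r0 by rewrite inE u_r0 u_parent eqxx.
by rewrite children_root inE => /eqP <-; apply: fconnect_iter.
Qed.

Lemma lcaP (A : {set V}) a : a \in A ->
  above parent A (lca A) /\ forall w, above parent A w -> prec (lca A) w.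
Proof.
move=> aA; have A_r0 : above parent A r0 by apply/forall_inP => t _; apply: prec_root.
have a_A w : above parent A w -> prec a (id w) by move/forall_inP; apply.
have [v Av v_least] := ex_prec_least (ex_intro _ r0 A_r0) a_A.
rewrite /lca; case: pickP => [u /andP [Au /forall_inP u_least] | /(_ v)] /=.
  by split=> // w /u_least.
by rewrite Av => /negbT/negP; case; apply/forall_inP.
Qed.

Lemma above2 a b v : above parent [set a; b] v = prec a v && prec b v.
Proof.
apply/forall_inP/andP => [ab_v | [a_v b_v] t].
  by split; apply: ab_v; rewrite !inE eqxx ?orbT.
by rewrite !inE => /orP [] /eqP ->.
Qed.

Lemma lca_ub (A : {set V}) a : a \in A -> prec a (lca A).
Proof. by move=> aA; have [/forall_inP A_lca _] := lcaP aA; apply: A_lca. Qed.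

Lemma lca2_ubl a b : prec a (lca [set a; b]).
Proof. exact/lca_ub/set21. Qed.

Lemma lca2_ubr a b : prec b (lca [set a; b]).
Proof. exact/lca_ub/set22. Qed.

Lemma lca2_least a b w : prec a w -> prec b w -> prec (lca [set a; b]) w.
Proof.
by move=> a_w b_w; have [_] := lcaP (set21 a b); apply; rewrite above2 a_w.
Qed.

Lemma outgroup_not_prec (L : {set V}) a z :
  a \in L -> outgroup parent r0 L z -> ~~ prec z (lca L).
Proof.
move=> aL [_ [_ /andP [lt_lca neq_lca]]]; apply: contra neq_lca => z_lca.
apply/eqP/(prec_antisym lt_lca); have [L_lca _] := lcaP aL.
have [_] := lcaP (setU1r z aL); apply; apply/forall_inP => t.
by rewrite in_setU1 => /predU1P [-> // | /(forall_inP L_lca)].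
Qed.

(* r0 and rho lie above every leaf, so neither is below a clade missing one. *)
Lemma below_clade_edge z w u :
  z != r0 -> ~~ prec z w -> prec u w -> (u != r0) && (u != rho).
Proof.
move=> z_r0 z_w u_w; apply/andP; split; apply: contraNneq z_w => u_root.
  by apply: prec_trans (prec_root z) _; rewrite -u_root.
by apply: prec_trans (prec_rho z_r0) _; rewrite -u_root.
Qed.

Definition nearer (x : V) : rel V :=
  fun a b => prec (lca [set x; a]) (lca [set x; b]).

Lemma nearer_trans x : transitive (nearer x).
Proof. by move=> b a c; apply: prec_trans. Qed.

Section Clade.
Variables (x a b z w : V).
Hypotheses (x_w : prec x w) (a_w : prec a w) (b_w : prec b w).
Hypotheses (z_r0 : z != r0) (z_w : ~~ prec z w).

Lemma quartet_cladeE : quartet x a b z = ~~ nearer x b a.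
Proof.
apply/idP/idP => [/existsP [u /and3P [_ _]] | not_ba].
  rewrite /below => /orP [/andP [/andP [/andP [x_u a_u] b_u] _] | ].
    apply: contra b_u => ba; apply: prec_trans (lca2_ubr x b) (prec_trans ba _).
    exact: lca2_least.
  move=> /andP [/andP [/andP [b_u z_u] x_u] _].
  by have := laminar_clades b_u b_w z_u x_w; rewrite (negbTE z_w) (negbTE x_u).
have a_lca_w : prec (lca [set x; a]) w by apply: lca2_least.
apply/existsP; exists (lca [set x; a]).
have /andP [-> ->] := below_clade_edge z_r0 z_w a_lca_w.
rewrite /below lca2_ubl lca2_ubr /=.
apply/orP; left; apply/andP; split.
  by apply: contra not_ba => b_lca; apply: lca2_least => //; apply: lca2_ubl.
by apply: contra z_w => z_lca; apply: prec_trans z_lca a_lca_w.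
Qed.

Lemma quartet_test_cladeE :
  [|| quartet x z a b, star parent r0 x a b z | quartet x b a z] = nearer x b a.
Proof.
rewrite /star -[nearer x b a]negbK -quartet_cladeE.
case xabz: (quartet x a b z) => /=; last first.
  by case: (quartet x z a b); case: (quartet x b a z).
have -> : quartet x z a b = false.
  apply/negbTE/negP => xzab; have xazb : quartet x a z b by rewrite quartet_swap.
  exact: quartet_incompatible xazb xzab.
by apply/negbTE/negP => xbaz; apply: quartet_incompatible xabz xbaz.
Qed.

End Clade.

Lemma gamma_arcE x (Y : {set V}) zc :
  (forall a b, a \in Y -> b \in Y -> a != b -> outgroup parent r0 (x |: Y) (zc a b)) ->
  gamma_arc parent r0 x Y zc =2 fun a b => [&& a \in Y, b \in Y, a != b & nearer x b a].
Proof.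
move=> out a b; rewrite /gamma_arc.
case aY: (a \in Y) => //; case bY: (b \in Y) => //; case ab: (a != b) => //=.
have z_out := out a b aY bY ab; have [_ [z_leaf _]] := z_out.
have z_r0 : zc a b != r0 by move: z_leaf; rewrite !inE => /andP [_ /andP []].
exact: quartet_test_cladeE (lca_ub (setU11 x Y)) (lca_ub (setU1r x aY))
  (lca_ub (setU1r x bY)) z_r0 (outgroup_not_prec (setU11 x Y) z_out).
Qed.

Section BestMatch.
Variables (S : eqType) (sigma : V -> S) (x : V) (s : S).
Hypotheses (x_leaf : x \in leaves) (s_inhabited : exists2 y, y \in leaves & sigma y = s).

Lemma ex_best_match : exists2 y, sigma y = s & best_match parent r0 sigma x y.
Proof.
have [y0 y0_leaf y0_s] := s_inhabited.
have [|y /andP [y_leaf /eqP y_s] y_least] :=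
  @ex_prec_least _ parent _ [pred y | (y \in leaves) && (sigma y == s)]
    (fun y => lca [set x; y]) x _ (fun y _ => lca2_ubl x y).
  by exists y0; rewrite /= y0_leaf y0_s eqxx.
exists y => //; do 2!split=> //.
by move=> y' y'_leaf y'_s; apply: y_least; rewrite /= y'_leaf y'_s y_s eqxx.
Qed.

Variable Y : {set V}.
Hypothesis Y_sub : Y \subset [set y in leaves | sigma y == s].
Hypothesis Y_best : forall y, y \in leaves -> sigma y = s ->
  best_match parent r0 sigma x y -> y \in Y.

Lemma best_matchP y :
  [/\ y \in leaves, sigma y = s & best_match parent r0 sigma x y] <->
  y \in minima Y (nearer x).
Proof.
have Y_s y' : y' \in Y -> y' \in leaves /\ sigma y' = s.
  by move/(subsetP Y_sub); rewrite inE => /andP [-> /eqP].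
split=> [[y_leaf y_s [_ [_ y_best]]] | /minimaP [yY y_min]].
  apply/minimaP; split=> [|y' /Y_s [y'_leaf y'_s]]; first exact: Y_best.
  by apply: y_best; rewrite // y'_s y_s.
have [y_leaf y_s] := Y_s y yY; do 3!split=> //.
have [m m_s m_best] := ex_best_match; have [_ [m_leaf m_least]] := m_best.
move=> y' y'_leaf y'_s; apply: prec_trans _ (y_min m (Y_best m_leaf m_s m_best)) _.
by apply: m_least; rewrite // y'_s y_s m_s.
Qed.

End BestMatch.

End PlantedTree.

Theorem theorem1 (V : finType) (parent : V -> V) (r0 : V)
  (S : eqType) (sigma : V -> S) (x : V) (s : S)
  (Y Z : {set V}) (zc : V -> V -> V) :
  planted_tree parent r0 ->
  x \in leaves parent r0 ->
  s != sigma x ->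
  (exists2 y, y \in leaves parent r0 & sigma y = s) ->
  Y \subset [set y in leaves parent r0 | sigma y == s] ->
  (forall y, y \in leaves parent r0 -> sigma y = s ->
     best_match parent r0 sigma x y -> y \in Y) ->
  Z != set0 ->
  (forall z, z \in Z -> outgroup parent r0 (x |: Y) z) ->
  (forall a b, a \in Y -> b \in Y -> a != b -> zc a b \in Z /\ zc a b = zc b a) ->
  forall B : {set V},
    (is_scc Y (gamma_arc parent r0 x Y zc) B /\
     no_out_edges (gamma_arc parent r0 x Y zc) B)
    <-> (forall y, y \in B <->
           [/\ y \in leaves parent r0, sigma y = s &
                best_match parent r0 sigma x y]).
Proof.
move=> tree x_leaf _ s_inhabited Y_sub Y_best _ Z_out zcZ B.
have arcE := gamma_arcE tree (fun a b aY bY ab => Z_out _ (zcZ a b aY bY ab).1).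
have bmP := best_matchP tree x_leaf s_inhabited Y_sub Y_best.
have [m m_s m_best] := ex_best_match tree x_leaf s_inhabited.
have m_min : m \in minima Y (nearer parent r0 x).
  by apply/bmP; split=> //; case: m_best => _ [].
apply: iff_trans (sink_scc_minima (@nearer_trans _ parent r0 x) arcE m_min B) _.
split=> [-> y | B_best]; first exact: iff_sym (bmP y).
by apply/setP => y; apply/idP/idP => [/B_best/bmP | /bmP/B_best].
Qed.
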